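(* Let $a<b$ and let $f:[a,b]\rightarrow\mathbb{R}$ be a differentiable mapping in $(a,b)$ such that $f'\in L^1[a,b]$ and $\gamma\le f'(x)\le \Gamma$ for all $x\in [a,b]$, where $\gamma,\Gamma$ are real constants. Put $S=\frac{f(b)-f(a)}{b-a}$. Then \[ \left|\frac{f\left(\frac{3a+b}{4}\right)+f\left(\frac{a+3b}{4}\right)}{2} -\frac{1}{b-a}\int_{a}^{b}f(t)\,dt\right|\leq \frac{b-a}{4}(S-\gamma) \] and \[ \left|\frac{f\left(\frac{3a+b}{4}\right)+f\left(\frac{a+3b}{4}\right)}{2} -\frac{1}{b-a}\int_{a}^{b}f(t)\,dt\right|\leq \frac{b-a}{4}(\Gamma-S). \] *)

From HB Require Import structures.
From mathcomp Require Import all_boot all_order all_algebra.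
From mathcomp Require Import all_classical all_reals all_analysis.
Set Implicit Arguments. Unset Strict Implicit. Unset Printing Implicit Defensive.

(* The error of the two-point quarter rule is a linear functional that vanishes
   on affine functions, so f may be replaced by f - gamma t or by Gamma t - f;
   by the mean value theorem these are nondecreasing.  For a nondecreasing g,
   the integral over each quarter of [a, b] lies between h g(left end) and
   h g(right end), h = (b - a)/4, and combining the four quarters bounds the
   error by (g b - g a)/4. *)

From HB Require Import structures.
From mathcomp Require Import all_boot all_order all_algebra.
From mathcomp Require Import all_classical all_reals all_analysis.
From mathcomp Require Import ring lra.
Import Order.TTheory GRing.Theory Num.Theory.
Import numFieldNormedType.Exports.
Local Open Scope classical_set_scope.
Local Open Scope ring_scope.

Section quarter_rule.
Context {R : realType}.
Notation mu := (@lebesgue_measure R).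
Implicit Types (f g : R -> R) (a b x y : R).

Lemma is_derive_halfsqr (t : R) : is_derive t 1 (fun x : R => x ^+ 2 / 2) t.
Proof.
have H : is_derive t 1 ((2:R)^-1 \*: (@id R ^+ 2)) ((2:R)^-1 *: ((2%:R * id t ^+ 1) *: 1)).
  by apply: is_deriveZ; apply: is_deriveX.
have -> : (fun x : R => x ^+ 2 / 2) = (2:R)^-1 \*: (@id R ^+ 2).
  by apply/funext => x /=; rewrite mulrC.
apply: is_derive_eq H _.
by rewrite /= expr1 scalerA mulrA mulVf ?mul1r ?pnatr_eq0 // -[RHS]mulr1.
Qed.

Lemma Rintegral_id x y : x < y ->
  \int[mu]_(t in `[x, y]) t = (y ^+ 2 - x ^+ 2) / 2.
Proof.
move=> xy.
have cF : continuous (fun x : R => x ^+ 2 / 2).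
  move=> z; apply: differentiable_continuous.
  by apply/derivable1_diffP; have [] := is_derive_halfsqr z.
rewrite /Rintegral (@continuous_FTC2 _ _ (fun x : R => x ^+ 2 / 2))//=.
- by rewrite -mulrBl.
- by apply: continuous_in_subspaceT => z _; exact: cvg_id.
- split; last 2 first.
  + exact: cvg_at_right_filter (cF x).
  + exact: cvg_at_left_filter (cF y).
  by move=> z _; have [] := is_derive_halfsqr z.
- by move=> z _; rewrite derive1E; case: (is_derive_halfsqr z).
Qed.

Lemma continuous_itv_integrable {x y f} :
  {within `[x, y], continuous f} -> mu.-integrable `[x, y] (EFin \o f).
Proof. by move=> cf; apply: continuous_compact_integrable => //; exact: segment_compact. Qed.

Lemma Rintegral_itv_split {x z y f} : x <= z -> z <= y ->
  {within `[x, y], continuous f} ->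
  \int[mu]_(t in `[x, y]) f t =
  \int[mu]_(t in `[x, z]) f t + \int[mu]_(t in `[z, y]) f t.
Proof.
move=> xz zy /continuous_itv_integrable intf.
have := @Rintegral_itvB R f (BLeft x) (BRight y) z intf.
rewrite !bnd_simp => /(_ xz zy).
rewrite Rintegral_itv_obnd_cbnd => [<-|]; first by rewrite addrC subrK.
by apply: integrableS intf => //; apply: subset_itv; rewrite bnd_simp.
Qed.

Lemma nondecreasing_Rintegral_bounds x y g : x <= y ->
  {within `[x, y], continuous g} -> {in `[x, y] &, nondecreasing g} ->
  g x * (y - x) <= \int[mu]_(t in `[x, y]) g t <= g y * (y - x).
Proof.
move=> xy cg ndg.
have mxy : fine (mu `[x, y]) = y - x.
  rewrite lebesgue_measure_itv /= lte_fin.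
  case: ltP => // yx; suff -> : x = y by rewrite subrr.
  by apply/eqP; rewrite eq_le xy.
have xin : x \in `[x, y] by rewrite in_itv /= lexx xy.
have yin : y \in `[x, y] by rewrite in_itv /= lexx xy andbT.
have intc r : mu.-integrable `[x, y] (EFin \o cst r).
  by apply: continuous_itv_integrable; apply: continuous_subspaceT; exact: cst_continuous.
rewrite -mxy -!Rintegral_cst //; apply/andP; split.
- apply: le_Rintegral => //; [exact: intc|exact: continuous_itv_integrable|].
  by move=> t /= tin; apply: ndg => //; move: tin; rewrite in_itv /= => /andP[].
- apply: le_Rintegral => //; [exact: continuous_itv_integrable|exact: intc|].
  by move=> t /= tin; apply: ndg => //; move: tin; rewrite in_itv /= => /andP[].
Qed.

Lemma within_continuous_comb_id (al be : R) {x y f} :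
  {within `[x, y], continuous f} ->
  {within `[x, y], continuous (fun t => al * f t + be * t)}.
Proof.
move=> cf t.
apply: (@continuousD _ _ _ (fun t : subspace `[x, y] => al * f t)
                            (fun t : subspace `[x, y] => be * t)).
- by apply: (@continuousM _ (subspace `[x, y]) (cst al) f); [exact: cvg_cst|exact: cf].
- apply: (@continuousM _ (subspace `[x, y]) (cst be) id); first exact: cvg_cst.
  by apply: continuous_subspaceT => z; exact: cvg_id.
Qed.

Definition quarter_rule_error f a b :=
  (f ((3 * a + b) / 4) + f ((a + 3 * b) / 4)) / 2
  - (b - a)^-1 * \int[mu]_(t in `[a, b]) f t.

Lemma quarter_rule_error_comb_id (al be : R) {f a b} : a < b ->
  {within `[a, b], continuous f} ->
  quarter_rule_error (fun t => al * f t + be * t) a b = al * quarter_rule_error f a b.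
Proof.
move=> ab cf; have ba0 : b - a != 0 by rewrite subr_eq0 gt_eqF.
have cid : {within `[a, b], continuous (@id R)}.
  by apply: continuous_subspaceT => z; exact: cvg_id.
have intf := continuous_itv_integrable cf.
have intid := continuous_itv_integrable cid.
rewrite /quarter_rule_error RintegralD //; last 2 first.
- exact: integrableZl intf.
- exact: integrableZl intid.
by rewrite !RintegralZl // Rintegral_id //; field.
Qed.

Lemma quarter_rule_error_nondecreasing {g a b} : a < b ->
  {within `[a, b], continuous g} -> {in `[a, b] &, nondecreasing g} ->
  `|quarter_rule_error g a b| <= (g b - g a) / 4.
Proof.
move=> ab cg ndg.
set h := (b - a) / 4; set p := a + h; set m := p + h; set q := m + h.
have h0 : 0 < h by rewrite divr_gt0 // subr_gt0.
have ap : a <= p by rewrite lerDl ltW.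
have pm : p <= m by rewrite lerDl ltW.
have mq : m <= q by rewrite lerDl ltW.
have qb : q <= b by rewrite -subr_ge0 /q /m /p /h; lra.
have cgW x y : a <= x -> y <= b -> {within `[x, y], continuous g}.
  by move=> ax yb; apply: continuous_subspaceW cg; apply: subset_itv; rewrite bnd_simp.
have quarter x y : a <= x -> y <= b -> y - x = h ->
    g x * h <= \int[mu]_(t in `[x, y]) g t <= g y * h.
  move=> ax yb yxh; rewrite -yxh; apply: nondecreasing_Rintegral_bounds.
  - by rewrite -subr_ge0 yxh ltW.
  - exact: cgW.
  - by apply: sub_in2 ndg; apply: subitvP; rewrite subitvE !bnd_simp ax yb.
have am : a <= m by exact: le_trans pm.
have mb : m <= b by exact: le_trans qb.
rewrite /quarter_rule_error (Rintegral_itv_split ap (le_trans pm mb) cg).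
rewrite (Rintegral_itv_split pm mb (cgW _ _ ap (lexx b))).
rewrite (Rintegral_itv_split mq qb (cgW _ _ am (lexx b))).
have -> : (3 * a + b) / 4 = p by rewrite /p /h; field.
have -> : (a + 3 * b) / 4 = q by rewrite /q /m /p /h; field.
have dh x : x + h - x = h by rewrite addrAC subrr add0r.
have /andP[l1 u1] := quarter a p (lexx a) (le_trans pm mb) (dh a).
have /andP[l2 u2] := quarter p m ap mb (dh p).
have /andP[l3 u3] := quarter m q am qb (dh m).
have hb : b - q = h by rewrite /q /m /p /h; field.
have /andP[l4 u4] := quarter q b (le_trans am mq) (lexx b) hb.
have mono x y : a <= x -> x <= y -> y <= b -> g x <= g y.
  move=> ax xy yb; apply: ndg; rewrite // in_itv /= ?ax ?yb /=.
    exact: le_trans xy yb.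
  by rewrite (le_trans ax xy).
set I := \int[mu]_(t in `[a, p]) g t + _.
have Ilo : g a + g p + g m + g q <= I / h.
  by rewrite ler_pdivlMr // /I; lra.
have Ihi : I / h <= g p + g m + g q + g b.
  by rewrite ler_pdivrMr // /I; lra.
have -> : (b - a)^-1 * I = I / h / 4 by rewrite /h; field; rewrite subr_eq0 gt_eqF.
have := mono a p (lexx a) ap (le_trans pm mb).
have := mono p m ap pm mb.
have := mono m q am mq qb.
have := mono q b (le_trans am mq) qb (lexx b).
rewrite ler_norml; lra.
Qed.

Lemma derive1_bounded_increment {a b gamma Gamma : R} {f} :
  {within `[a, b], continuous f} ->
  (forall x, a < x < b -> derivable f x 1) ->
  (forall x, a < x < b -> gamma <= derive1 f x <= Gamma) ->
  forall u v, a <= u -> u <= v -> v <= b ->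
  gamma * (v - u) <= f v - f u <= Gamma * (v - u).
Proof.
move=> cf df hf u v au; rewrite le_eqVlt => /predU1P[<- _|uv vb].
  by rewrite !subrr !mulr0 lexx.
have uvab z : z \in `]u, v[ -> a < z < b.
  rewrite in_itv /= => /andP[uz zv].
  by rewrite (le_lt_trans au uz) (lt_le_trans zv vb).
have cuv : {within `[u, v], continuous f}.
  by apply: continuous_subspaceW cf; apply: subset_itv; rewrite bnd_simp // ltW.
have f'f z : z \in `]u, v[ -> is_derive z 1 f (derive1 f z).
  by move=> /uvab zab; rewrite derive1E; exact/derivableP/df.
have [z /uvab zab ->] := MVT uv f'f cuv.
have /andP[gz zG] := hf z zab.
have vu : 0 <= v - u by rewrite subr_ge0 ltW.
by rewrite !ler_wpM2r.
Qed.

End quarter_rule.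

Theorem corollary2p1 (R : realType) (a b gamma Gamma : R) (f : R -> R) :
  a < b ->
  {within `[a, b], continuous f} ->
  (forall x, a < x < b -> derivable f x 1) ->
  (@lebesgue_measure R).-integrable `[a, b] (EFin \o (derive1 f)) ->
  (forall x, a < x < b -> gamma <= (derive1 f) x <= Gamma) ->
  let S := (f b - f a) / (b - a) in
  let M := (f ((3 * a + b) / 4) + f ((a + 3 * b) / 4)) / 2
           - (b - a)^-1 * Rintegral (@lebesgue_measure R) `[a, b] f in
  `|M| <= (b - a) / 4 * (S - gamma) /\ `|M| <= (b - a) / 4 * (Gamma - S).
Proof.
move=> ab cf df _ hf S M.
have ba0 : b - a != 0 by rewrite subr_eq0 gt_eqF.
have incr := derive1_bounded_increment cf df hf.
have bound (al be : R) :
    (forall u v, a <= u -> u <= v -> v <= b -> al * f u + be * u <= al * f v + be * v) ->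
    `|al * M| <= (al * f b + be * b - (al * f a + be * a)) / 4.
  move=> nd; rewrite -(quarter_rule_error_comb_id al be ab cf).
  apply: quarter_rule_error_nondecreasing ab (within_continuous_comb_id al be cf) _.
  by move=> u v; rewrite !in_itv /= => /andP[au _] /andP[_ vb] uv; exact: nd.
split.
- have -> : (b - a) / 4 * (S - gamma) = (1 * f b + - gamma * b - (1 * f a + - gamma * a)) / 4.
    by rewrite /S; field.
  rewrite -[M]mul1r; apply: bound => u v au uv vb.
  by have := incr u v au uv vb; lra.
- have -> : (b - a) / 4 * (Gamma - S) = (-1 * f b + Gamma * b - (-1 * f a + Gamma * a)) / 4.
    by rewrite /S; field.
  rewrite -normrN -[- M]mulN1r; apply: bound => u v au uv vb.
  by have := incr u v au uv vb; lra.
Qed.
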